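(* Let $f\colon 2^{\mathcal{N}}\to\mathbb{R}$ be non-negative and submodular, $k$ a positive integer, $t_s\in[0,1]$, $c=\lceil t_s k\rceil$, $\alpha=1-1/k$, and $Z\subseteq\mathcal{N}$. Assume $\mathcal{N}\setminus Z$ contains at least $2k$ dummy elements (elements $d$ with $f(A\cup\{d\})=f(A)$ for all $A$). Consider the random sets $S_0,\dots,S_k$ produced by the Guided Random Greedy procedure defined below, and let $\mathrm{OPT}\in\arg\max\{f(T):|T|\le k\}$. Then for every integer $1\le i\le c$, \[ \mathbb{E}[f(S_i)]\ \ge\ (1-\alpha^i)\,f(\mathrm{OPT}\setminus Z)-\Big(1-\alpha^i-\tfrac{i}{k}\alpha^{i-1}\Big) f(\mathrm{OPT}\cup Z)+\alpha^i f(S_0), \] and for every integer $c+1\le i\le k$, \[ \mathbb{E}[f(S_i)]\ \ge\ \frac{i-c}{k}\,\alpha^{i-c-1} f(\mathrm{OPT})-\frac{i-c}{k}\big(\alpha^{i-c-1}-\alpha^{i-1}\big) f(\mathrm{OPT}\cup Z). \]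
   Context: Guided Random Greedy: set $S_0=\emptyset$. For $i=1,\dots,c$: let $M_i\subseteq\mathcal{N}\setminus(S_{i-1}\cup Z)$ be a set of size $k$ maximizing $\sum_{u\in M_i}\big(f(S_{i-1}\cup\{u\})-f(S_{i-1})\big)$; pick $u_i$ uniformly at random from $M_i$ and set $S_i=S_{i-1}\cup\{u_i\}$. For $i=c+1,\dots,k$: do the same but with $M_i\subseteq\mathcal{N}\setminus S_{i-1}$ (elements of $Z$ allowed). Submodularity: $f(A\cup\{s\})-f(A)\ge f(B\cup\{s\})-f(B)$ for $A\subseteq B$, $s\notin B$; non-negativity: $f\ge0$. *)

From HB Require Import structures.
From mathcomp Require Import all_boot all_order all_algebra.
Set Implicit Arguments. Unset Strict Implicit. Unset Printing Implicit Defensive.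
Import Order.TTheory GRing.Theory Num.Theory.
Local Open Scope ring_scope.

Section GRG.
Variables (R : archiRealFieldType) (T : finType).

Definition nonneg_fun (f : {set T} -> R) := forall A, 0 <= f A.

Definition submodular (f : {set T} -> R) :=
  forall (A B : {set T}) (s : T), A \subset B -> s \notin B ->
    f (s |: B) - f B <= f (s |: A) - f A.

Definition dummy (f : {set T} -> R) (d : T) := forall A : {set T}, f (d |: A) = f A.

Definition marg (f : {set T} -> R) (S : {set T}) (u : T) := f (u |: S) - f S.

(* The set S_{i-1} determined by the history of chosen elements u_1..u_{i-1}. *)
Definition setof (h : seq T) : {set T} := [set x in h].

(* [sel] is a (history-dependent, arbitrary tie-breaking) choice rule for M_i
   in Guided Random Greedy: at step i = size h + 1 it returns a set of size k
   inside N \ (S_{i-1} ∪ Z) if i <= c, inside N \ S_{i-1} otherwise,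
   maximizing the sum of marginal gains over all such sets. *)
Definition grg_valid_M (f : {set T} -> R) (k c : nat) (Z : {set T})
  (h : seq T) (M : {set T}) :=
  let S := setof h in
  let allowed := if ((size h).+1 <= c)%N then ~: (S :|: Z) else ~: S in
  [/\ #|M| = k, M \subset allowed &
      forall M' : {set T}, #|M'| = k -> M' \subset allowed ->
        \sum_(u in M') marg f S u <= \sum_(u in M) marg f S u].

Definition grg_selector (f : {set T} -> R) (k c : nat) (Z : {set T})
  (sel : seq T -> {set T}) :=
  forall h : seq T, (size h < k)%N -> grg_valid_M f k c Z h (sel h).

(* Expected value of f(S_{|h| + m}) given history h, where each step picks
   u uniformly at random from the k-element set sel h. *)
Fixpoint grg_exp (f : {set T} -> R) (k : nat) (sel : seq T -> {set T})
  (m : nat) (h : seq T) : R :=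
  match m with
  | 0 => f (setof h)
  | m'.+1 => (k%:R)^-1 * \sum_(u in sel h) grg_exp f k sel m' (rcons h u)
  end.

Definition grg_E (f : {set T} -> R) (k : nat) (sel : seq T -> {set T}) (i : nat) : R :=
  grg_exp f k sel i [::].

End GRG.

From mathcomp Require Import all_boot all_order all_algebra.
From mathcomp Require Import ring lra zify.
Set Implicit Arguments. Unset Strict Implicit. Unset Printing Implicit Defensive.
Import Order.TTheory GRing.Theory Num.Theory.
Local Open Scope ring_scope.

(* Let S be the current set and X any admissible set of size at most k (OPT \ Z
   during the first c steps, OPT afterwards). Padding X \ S with dummy elements,
   of which there are 2k outside Z, yields a competitor for M_i, so the expected
   gain of a step is at least (f(S u X) - f(S))/k. By submodularity and
   non-negativity, one step multiplies E f(S u W) by at least alpha for any W,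
   so E f(S_j u W) >= alpha^j f(W); and while S avoids Z, submodularity gives
   f(S u (OPT \ Z)) >= f(OPT \ Z) - f(OPT u Z) + f(S u OPT u Z). Together these
   give recurrences e_(j+1) >= alpha e_j + r alpha^j for the expected values,
   whose solutions are the two bounds. *)

Lemma set_ind_setD1 (T : finType) (P : {set T} -> Prop) :
  P set0 -> (forall x (X : {set T}), x \in X -> P (X :\ x) -> P X) -> forall X, P X.
Proof.
move=> P0 PD X; move: {2}#|X| (erefl #|X|) => n; elim: n X => [|n IH] X cardX.
  by move/eqP: cardX; rewrite cards_eq0 => /eqP ->.
have [x xX] : exists x, x \in X by apply/set0Pn; rewrite -card_gt0 cardX.
by apply: (PD x) => //; apply: IH; move: cardX; rewrite (cardsD1 x) xX; case.
Qed.

Lemma subset_of_card (T : finType) (A : {set T}) n : (n <= #|A|)%N ->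
  exists2 B : {set T}, B \subset A & #|B| = n.
Proof.
move=> nA; exists [set x in take n (enum A)].
  by apply/subsetP => x; rewrite inE => /mem_take; rewrite mem_enum.
rewrite cardsE; have /card_uniqP -> := take_uniq n (enum_uniq (mem A)).
by rewrite size_takel // -cardE.
Qed.

Lemma setof_nil (T : finType) : setof [::] = set0 :> {set T}.
Proof. by apply/setP => x; rewrite !inE. Qed.

Lemma setof_rcons (T : finType) (h : seq T) u : setof (rcons h u) = u |: setof h.
Proof. by apply/setP => x; rewrite !inE mem_rcons in_cons. Qed.

Lemma card_setof (T : finType) (h : seq T) : (#|setof h| <= size h)%N.
Proof. by rewrite cardsE card_size. Qed.

Section Submodular.
Variables (R : archiRealFieldType) (T : finType) (f : {set T} -> R).
Hypothesis f_submod : submodular f.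

Lemma marg_antitone (A B : {set T}) x : A \subset B -> (x \in B -> x \in A) ->
  marg f B x <= marg f A x.
Proof.
move=> AB xBA; rewrite /marg; case xB: (x \in B); last by apply: f_submod; rewrite ?xB.
by rewrite !(setUidPr _) ?sub1set ?xBA // !subrr.
Qed.

Lemma setU_gain_le_sum_marg (A M : {set T}) :
  f (A :|: M) - f A <= \sum_(u in M) marg f A u.
Proof.
elim/set_ind_setD1: M => [|x M xM IH]; first by rewrite big_set0 setU0 subrr.
rewrite (big_setD1 x xM) /=.
have : marg f (A :|: (M :\ x)) x <= marg f A x.
  by apply: marg_antitone; rewrite ?subsetUl // !inE eqxx orbF.
rewrite /marg (setUCA [set x] A) setD1K //; lra.
Qed.

Lemma setU_gain_antitone (A B X : {set T}) : A \subset B ->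
  (forall x, x \in X -> x \in B -> x \in A) ->
  f (B :|: X) - f B <= f (A :|: X) - f A.
Proof.
move=> AB; elim/set_ind_setD1: X => [|x X xX IH] XBA; first by rewrite !setU0 !subrr.
have {}IH : f (B :|: X :\ x) - f B <= f (A :|: X :\ x) - f A.
  by apply: IH => y /setD1P[_]; exact: XBA.
have : marg f (B :|: (X :\ x)) x <= marg f (A :|: (X :\ x)) x.
  apply: marg_antitone; first exact: setSU.
  by rewrite !inE eqxx /= !orbF; exact: XBA.
rewrite /marg (setUCA [set x] A) (setUCA [set x] B) setD1K //; lra.
Qed.

End Submodular.

Section Expectation.
Variables (R : archiRealFieldType) (T : finType) (k : nat) (sel : seq T -> {set T}).

Fixpoint Ex (m : nat) (h : seq T) (g : seq T -> R) : R :=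
  if m is m'.+1 then k%:R^-1 * \sum_(u in sel h) Ex m' (rcons h u) g else g h.

Definition step_avg (g : seq T -> R) (h : seq T) : R :=
  k%:R^-1 * \sum_(u in sel h) g (rcons h u).

Lemma Ex_step m h g : Ex m.+1 h g = Ex m h (step_avg g).
Proof.
elim: m h => [|m IH] h //=.
by congr (_ * _); apply: eq_bigr => u _; rewrite -IH.
Qed.

Lemma Ex_scale m h a g : Ex m h (fun h' => a * g h') = a * Ex m h g.
Proof.
elim: m h => [|m IH] h //=.
by rewrite (eq_bigr _ (fun u _ => IH _)) -mulr_sumr mulrCA.
Qed.

Lemma Ex_add m h g1 g2 : Ex m h (fun h' => g1 h' + g2 h') = Ex m h g1 + Ex m h g2.
Proof.
elim: m h => [|m IH] h //=.
by rewrite (eq_bigr _ (fun u _ => IH _)) big_split mulrDr.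
Qed.

Lemma Ex_ge0 m h g : (forall h', 0 <= g h') -> 0 <= Ex m h g.
Proof.
move=> g_ge0; elim: m h => [|m IH] h //=.
by rewrite mulr_ge0 ?invr_ge0 ?ler0n ?sumr_ge0.
Qed.

Lemma Ex_le (P : seq T -> Prop) m h g1 g2 :
  (forall h' u, P h' -> (size h' < k)%N -> u \in sel h' -> P (rcons h' u)) ->
  P h -> (size h + m <= k)%N ->
  (forall h', P h' -> size h' = (size h + m)%N -> g1 h' <= g2 h') ->
  Ex m h g1 <= Ex m h g2.
Proof.
move=> P_step; elim: m h => [|m IH] h Ph hm g12 /=; first by apply: g12; rewrite ?addn0.
rewrite ler_wpM2l ?invr_ge0 ?ler0n // ler_sum // => u u_sel.
apply: IH; rewrite ?size_rcons ?addSnnS //.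
by apply: P_step => //; lia.
Qed.

Hypothesis k_gt0 : (0 < k)%N.
Hypothesis card_sel : forall h, (size h < k)%N -> #|sel h| = k.

Lemma Ex_cst m h d : (size h + m <= k)%N -> Ex m h (fun=> d) = d.
Proof.
elim: m h => [|m IH] h hm //=.
have IHu u : Ex m (rcons h u) (fun=> d) = d by apply: IH; rewrite size_rcons addSnnS.
have hk : (size h < k)%N by lia.
rewrite (eq_bigr _ (fun u _ => IHu u)) sumr_const card_sel // -[d *+ k]mulr_natl.
by rewrite mulKf // pnatr_eq0 -lt0n.
Qed.

End Expectation.

Lemma recurrence_ge (R : numDomainType) (b : nat -> R) (a r : R) n :
  0 <= a -> 0 <= b 0%N ->
  (forall l, (l < n)%N -> a * b l + r * a ^+ l <= b l.+1) ->
  forall l, (l <= n)%N -> l%:R * r * a ^+ l.-1 <= b l.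
Proof.
move=> a_ge0 b0_ge0 b_step; elim=> [|l IH] ln; first by rewrite !mul0r.
apply: le_trans (b_step l ln).
have -> : l.+1%:R * r * a ^+ l = a * (l%:R * r * a ^+ l.-1) + r * a ^+ l.
  by case: l {IH ln} => [|l]; rewrite ?exprS /=; ring.
by rewrite lerD2r ler_wpM2l // IH // ltnW.
Qed.

Lemma ceil_mul_nat_le (R : archiRealFieldType) (x : R) n :
  x <= 1 -> Num.ceil (x * n%:R) <= n%:Z.
Proof.
by move=> x_le1; rewrite ceil_le_int -pmulrn -[leRHS]mul1r ler_wpM2r ?ler0n.
Qed.

Section GuidedRandomGreedy.
Variables (R : archiRealFieldType) (T : finType) (f : {set T} -> R).
Variables (k c : nat) (Z D OPT : {set T}) (sel : seq T -> {set T}).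
Hypotheses (f_ge0 : nonneg_fun f) (f_submod : submodular f).
Hypotheses (k_gt0 : (0 < k)%N) (c_le_k : (c <= k)%N).
Hypothesis sel_ok : grg_selector f k c Z sel.
Hypotheses (D_Z : D \subset ~: Z) (card_D : (2 * k <= #|D|)%N).
Hypothesis D_dummy : forall d, d \in D -> dummy f d.
Hypothesis card_OPT : (#|OPT| <= k)%N.

Local Notation alpha := (1 - k%:R^-1 : R).
Local Notation E m g := (Ex k sel m [::] g).

Definition allowed (h : seq T) : {set T} :=
  if ((size h).+1 <= c)%N then ~: (setof h :|: Z) else ~: setof h.

Definition fU (W : {set T}) (h : seq T) : R := f (W :|: setof h).

Lemma grg_exp_Ex m h : grg_exp f k sel m h = Ex k sel m h (fU set0).
Proof.
elim: m h => [|m IH] h /=; first by rewrite /fU set0U.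
by congr (_ * _); apply: eq_bigr => u _; rewrite IH.
Qed.

Lemma kR_neq0 : k%:R != 0 :> R.
Proof. by rewrite pnatr_eq0 -lt0n. Qed.

Lemma alpha_ge0 : 0 <= alpha.
Proof. by rewrite subr_ge0 invf_le1 ?ltr0n // ler1n. Qed.

Lemma sel_card h : (size h < k)%N -> #|sel h| = k.
Proof. by case/sel_ok. Qed.

Lemma sel_allowed h : (size h < k)%N -> sel h \subset allowed h.
Proof. by case/sel_ok. Qed.

Lemma dummies_allowed h : D :\: setof h \subset allowed h.
Proof.
apply/subsetP => x /setDP[xD]; rewrite inE => xh; have := subsetP D_Z x xD.
by rewrite /allowed; case: ifP => _; rewrite !inE ?negb_or xh.
Qed.

Lemma sel_marg_ge h (X : {set T}) : (size h < k)%N -> (#|X| <= k)%N ->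
  X :\: setof h \subset allowed h ->
  f (X :|: setof h) - f (setof h) <= \sum_(u in sel h) marg f (setof h) u.
Proof.
move=> hk cardX XA; set S := setof h; set Y := X :\: S.
have cardS : (#|S| <= size h)%N := card_setof h.
have cardY : (#|Y| <= k)%N := leq_trans (subset_leq_card (subsetDl X S)) cardX.
have [Q QD cardQ] : exists2 Q : {set T}, Q \subset D :\: (S :|: Y) & #|Q| = (k - #|Y|)%N.
  apply: subset_of_card; rewrite cardsD.
  have := subset_leq_card (subsetIr D (S :|: Y)); rewrite cardsU; lia.
have YQ : [disjoint Y & Q].
  rewrite disjoint_sym disjoints_subset (subset_trans QD) //.
  by rewrite (subset_trans (subsetDr _ _)) // setCS subsetUr.
have [_ _ sel_max] := sel_ok hk.
apply: le_trans (sel_max (Y :|: Q) _ _); first last.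
- rewrite subUset XA (subset_trans _ (dummies_allowed h)) //.
  by rewrite (subset_trans QD) // setDS // subsetUl.
- by rewrite cardsU disjoint_setI0 // cards0 cardQ; lia.
rewrite (eq_bigl [predU Y & Q]) => [|x]; last by rewrite !inE.
rewrite bigU //= [s in _ <= _ + s]big1 ?addr0 => [|u uQ].
  have -> : X :|: S = S :|: Y.
    by apply/setP => x; rewrite !inE orbC; case: (x \in h).
  exact: setU_gain_le_sum_marg.
have /setDP[uD _] := subsetP QD u uQ.
by rewrite /marg D_dummy // subrr.
Qed.

Definition avoids_Z_early (h : seq T) : Prop :=
  (size h <= c)%N -> setof h \subset ~: Z.

Lemma avoids_Z_early_step h u : avoids_Z_early h -> (size h < k)%N ->
  u \in sel h -> avoids_Z_early (rcons h u).
Proof.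
move=> hZ hk u_sel; rewrite /avoids_Z_early size_rcons setof_rcons subUset sub1set => hc.
have := subsetP (sel_allowed hk) u u_sel; rewrite /allowed hc !inE negb_or => /andP[_ uZ].
by rewrite uZ hZ // ltnW.
Qed.

Lemma E_le m (g1 g2 : seq T -> R) : (m <= k)%N ->
  (forall h, avoids_Z_early h -> size h = m -> g1 h <= g2 h) -> E m g1 <= E m g2.
Proof.
move=> mk g12; apply: (Ex_le avoids_Z_early_step) => //.
by rewrite /avoids_Z_early setof_nil sub0set.
Qed.

Lemma E_cst m (d : R) : (m <= k)%N -> E m (fun=> d) = d.
Proof. exact: Ex_cst k_gt0 sel_card m [::] d. Qed.

Lemma step_avg_fU W h : (size h < k)%N ->
  step_avg k sel (fU W) h = fU W h + k%:R^-1 * \sum_(u in sel h) marg f (W :|: setof h) u.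
Proof.
move=> hk; rewrite /step_avg.
under eq_bigr => u _ do rewrite /fU setof_rcons setUCA.
rewrite /marg sumrB sumr_const sel_card // -mulr_natr /fU.
by field; exact: kR_neq0.
Qed.

Lemma step_avg_fU_ge W h : (size h < k)%N -> alpha * fU W h <= step_avg k sel (fU W) h.
Proof.
move=> hk; rewrite step_avg_fU //.
have -> : alpha * fU W h = fU W h + k%:R^-1 * (- fU W h) by ring.
rewrite lerD2l ler_wpM2l ?invr_ge0 ?ler0n //.
have := setU_gain_le_sum_marg f_submod (W :|: setof h) (sel h).
by have := f_ge0 (W :|: setof h :|: sel h); rewrite /fU; lra.
Qed.

Lemma step_avg_ge h (X : {set T}) : (size h < k)%N -> (#|X| <= k)%N ->
  X :\: setof h \subset allowed h ->
  alpha * fU set0 h + k%:R^-1 * fU X h <= step_avg k sel (fU set0) h.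
Proof.
move=> hk cardX XA; rewrite step_avg_fU //.
have -> : alpha * fU set0 h + k%:R^-1 * fU X h
          = fU set0 h + k%:R^-1 * (fU X h - fU set0 h) by ring.
rewrite lerD2l ler_wpM2l ?invr_ge0 ?ler0n // /fU set0U.
exact: sel_marg_ge.
Qed.

Lemma E_step_ge j (X : {set T}) : (j < k)%N -> (#|X| <= k)%N ->
  (forall h, avoids_Z_early h -> size h = j -> X :\: setof h \subset allowed h) ->
  alpha * E j (fU set0) + k%:R^-1 * E j (fU X) <= E j.+1 (fU set0).
Proof.
move=> jk cardX XA; rewrite Ex_step -!Ex_scale -Ex_add.
apply: E_le => [|h hZ hj]; first exact: ltnW.
by apply: step_avg_ge; rewrite ?hj // XA.
Qed.

Lemma E_fU_geometric W j l : (j + l <= k)%N ->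
  alpha ^+ l * E j (fU W) <= E (j + l) (fU W).
Proof.
elim: l => [|l IH] jl; first by rewrite mul1r addn0.
rewrite exprS -mulrA addnS Ex_step.
apply: le_trans (_ : alpha * E (j + l) (fU W) <= _).
  by rewrite ler_wpM2l ?alpha_ge0 // IH //; lia.
rewrite -Ex_scale; apply: E_le => [|h _ hjl]; first lia.
by apply: step_avg_fU_ge; rewrite hjl; lia.
Qed.

Lemma E_fU_ge W m : (m <= k)%N -> alpha ^+ m * f W <= E m (fU W).
Proof.
by move=> mk; have := E_fU_geometric W (j := 0) mk; rewrite /= /fU setof_nil setU0.
Qed.

(* In the first [c] steps the current set avoids [Z], hence meets [W'] only inside [W]. *)
Lemma E_fU_drop_Z m (W W' : {set T}) : (m <= c)%N -> W \subset W' -> W' :\: Z \subset W ->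
  f W - f W' + E m (fU W') <= E m (fU W).
Proof.
move=> mc WW' W'W; have mk := leq_trans mc c_le_k.
rewrite -[f W - f W'](E_cst _ mk) -Ex_add.
apply: E_le => // h hZ hm.
have := setU_gain_antitone f_submod (X := setof h) WW'.
have hS : setof h \subset ~: Z by apply: hZ; rewrite hm.
have XW'W x : x \in setof h -> x \in W' -> x \in W.
  by move=> xh xW'; apply: (subsetP W'W); rewrite in_setD xW' andbT -in_setC (subsetP hS).
by move=> /(_ XW'W); rewrite /fU !(setUC _ (setof h)); lra.
Qed.

Lemma phase1_step j : (j < c)%N ->
  alpha * E j (fU set0)
  + k%:R^-1 * (f (OPT :\: Z) - f (OPT :|: Z)) + k%:R^-1 * f (OPT :|: Z) * alpha ^+ j
  <= E j.+1 (fU set0).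
Proof.
move=> jc; have jk := leq_trans jc c_le_k.
have cardG : (#|OPT :\: Z| <= k)%N := leq_trans (subset_leq_card (subsetDl _ _)) card_OPT.
apply: le_trans (E_step_ge jk cardG _); last first.
  move=> h _ hj; rewrite /allowed hj jc.
  by apply/subsetP => x; rewrite !inE negb_or => /and3P[-> ->].
have GB : OPT :\: Z \subset OPT :|: Z := subset_trans (subsetDl _ _) (subsetUl _ _).
have BZG : (OPT :|: Z) :\: Z \subset OPT :\: Z by rewrite setDUl setDv setU0.
have := E_fU_drop_Z (ltnW jc) GB BZG; have := E_fU_ge (OPT :|: Z) (ltnW jk) => HB HG.
rewrite -addrA lerD2l -mulrA -mulrDr ler_wpM2l ?invr_ge0 ?ler0n //.
by rewrite mulrC; lra.
Qed.

Lemma E_fU_OPT_ge :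
  f OPT - f (OPT :|: Z) + alpha ^+ c * f (OPT :|: Z) <= E c (fU OPT).
Proof.
have BZO : (OPT :|: Z) :\: Z \subset OPT by rewrite setDUl setDv setU0 subsetDl.
have := E_fU_drop_Z (leqnn c) (subsetUl OPT Z) BZO.
by have := E_fU_ge (OPT :|: Z) c_le_k; lra.
Qed.

Lemma phase2_step j : (c <= j)%N -> (j < k)%N ->
  alpha * E j (fU set0)
  + k%:R^-1 * (f OPT - f (OPT :|: Z) + alpha ^+ c * f (OPT :|: Z)) * alpha ^+ (j - c)
  <= E j.+1 (fU set0).
Proof.
move=> cj jk; apply: le_trans (E_step_ge jk card_OPT _); last first.
  by move=> h _ hj; rewrite /allowed hj ltnNge cj subsetDr.
rewrite lerD2l -mulrA ler_wpM2l ?invr_ge0 ?ler0n // mulrC.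
have := E_fU_geometric OPT (j := c) (l := j - c); rewrite subnKC // => /(_ (ltnW jk)).
apply: le_trans; rewrite ler_wpM2l ?exprn_ge0 ?alpha_ge0 //.
exact: E_fU_OPT_ge.
Qed.

Lemma phase1_bound i : (i <= c)%N ->
  (1 - alpha ^+ i) * f (OPT :\: Z)
  - (1 - alpha ^+ i - i%:R / k%:R * alpha ^+ i.-1) * f (OPT :|: Z)
  + alpha ^+ i * f set0 <= E i (fU set0).
Proof.
set fG := f (OPT :\: Z); set fB := f (OPT :|: Z).
pose b l := E l (fU set0) - (1 - alpha ^+ l) * (fG - fB) - alpha ^+ l * f set0.
have b_step l : (l < c)%N -> alpha * b l + k%:R^-1 * fB * alpha ^+ l <= b l.+1.
  move=> lc; rewrite -subr_ge0.
  have -> : b l.+1 - (alpha * b l + k%:R^-1 * fB * alpha ^+ l)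
    = E l.+1 (fU set0) - (alpha * E l (fU set0) + k%:R^-1 * (fG - fB)
                          + k%:R^-1 * fB * alpha ^+ l) by rewrite /b exprS; ring.
  by rewrite subr_ge0 phase1_step.
have b0 : 0 <= b 0%N by rewrite /b /= /fU setof_nil setU0 expr0; lra.
move=> ic; rewrite -subr_ge0 (_ : _ - _ = b i - i%:R * (k%:R^-1 * fB) * alpha ^+ i.-1).
  by rewrite subr_ge0 (recurrence_ge alpha_ge0 b0 b_step ic).
by rewrite /b; ring.
Qed.

Lemma phase2_bound i : (c < i <= k)%N ->
  (i - c)%:R / k%:R * alpha ^+ (i - c).-1 * f OPT
  - (i - c)%:R / k%:R * (alpha ^+ (i - c).-1 - alpha ^+ i.-1) * f (OPT :|: Z)
  <= E i (fU set0).
Proof.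
case/andP=> ci ik; set q := f OPT - f (OPT :|: Z) + alpha ^+ c * f (OPT :|: Z).
pose b l := E (c + l) (fU set0).
have b_step l : (l < k - c)%N -> alpha * b l + k%:R^-1 * q * alpha ^+ l <= b l.+1.
  by move=> lkc; rewrite /b addnS -{2}(addKn c l); apply: phase2_step; lia.
have b0 : 0 <= b 0%N by apply: Ex_ge0 => h; exact: f_ge0.
have := recurrence_ge alpha_ge0 b0 b_step (leq_sub2r c ik).
rewrite /b subnKC ?(ltnW ci) //; apply: le_trans.
rewrite [leLHS](_ : _ = (i - c)%:R * (k%:R^-1 * q) * alpha ^+ (i - c).-1) //.
have -> : i.-1 = (c + (i - c).-1)%N by lia.
by rewrite /q exprD; ring.
Qed.

End GuidedRandomGreedy.

Theorem mainTheorem5 (R : archiRealFieldType) (T : finType)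
  (f : {set T} -> R) (k : nat) (ts : R) (c : nat) (Z : {set T})
  (sel : seq T -> {set T}) (OPT : {set T}) :
  nonneg_fun f -> submodular f ->
  (0 < k)%N ->
  0 <= ts <= 1 ->
  (c : int) = Num.ceil (ts * k%:R) ->
  (exists D : {set T}, [/\ D \subset ~: Z, (2 * k <= #|D|)%N &
                           forall d, d \in D -> dummy f d]) ->
  grg_selector f k c Z sel ->
  (#|OPT| <= k)%N -> (forall S : {set T}, (#|S| <= k)%N -> f S <= f OPT) ->
  let alpha := 1 - (k%:R)^-1 : R in
  (forall i : nat, (1 <= i <= c)%N ->
     grg_E f k sel i >=
       (1 - alpha ^+ i) * f (OPT :\: Z)
       - (1 - alpha ^+ i - i%:R / k%:R * alpha ^+ i.-1) * f (OPT :|: Z)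
       + alpha ^+ i * f set0) /\
  (forall i : nat, (c.+1 <= i <= k)%N ->
     grg_E f k sel i >=
       (i - c)%:R / k%:R * alpha ^+ (i - c).-1 * f OPT
       - (i - c)%:R / k%:R * (alpha ^+ (i - c).-1 - alpha ^+ i.-1) * f (OPT :|: Z)).
Proof.
move=> f_ge0 f_submod k_gt0 /andP[_ ts_le1] c_def [D [D_Z card_D D_dummy]] sel_ok
  card_OPT _ alpha.
have c_le_k : (c <= k)%N by rewrite -lez_nat c_def ceil_mul_nat_le.
split=> i /andP[i_lo i_hi]; rewrite /grg_E grg_exp_Ex.
- exact: (phase1_bound f_ge0 f_submod k_gt0 c_le_k sel_ok D_Z card_D D_dummy card_OPT).
- by apply: (phase2_bound f_ge0 f_submod k_gt0 c_le_k sel_ok D_Z card_D D_dummy card_OPT);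
    rewrite i_lo i_hi.
Qed.
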